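(* For every integer $n\ge 0$, \[ (p_{1,5}+p_{4,5})(n) = M+\sum_{k=1}^\infty (-1)^{k+1}\big( (p_{1,5}+p_{4,5})(n-P_{7,k})+(p_{1,5}+p_{4,5})(n-Q_{7,k})\big), \] where $P_{7,k}=\frac{k(5k-3)}{2}$, $Q_{7,k}=\frac{k(5k+3)}{2}$, and \[ M = \begin{cases} (-1)^m, &\text{if } n=5P_{5,m}\text{ or }n=5Q_{5,m}\text{ for some }m\in\mathbb{N}_0, \\ 0, & \text{otherwise,} \end{cases} \] with $P_{5,m}=\frac{m(3m-1)}{2}$, $Q_{5,m}=\frac{m(3m+1)}{2}$.
   Context: $(p_{1,5}+p_{4,5})(n)$ denotes the number of partitions of $n$ in which every part is congruent to $1$ or to $4$ modulo $5$; it equals $1$ for $n=0$ and is set to $0$ for $n\notin\mathbb{N}_0$. $\mathbb{N}_0=\{0,1,2,\dots\}$. *)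

From mathcomp Require Import all_boot all_order all_algebra.
Set Implicit Arguments. Unset Strict Implicit. Unset Printing Implicit Defensive.
Import GRing.Theory Num.Theory.

Definition good_part (i : nat) : bool := (i %% 5 == 1) || (i %% 5 == 4).

(* A partition of n is encoded by its multiplicity function m : i |-> number
   of parts equal to i (for 0 <= i <= n; every multiplicity is <= n). *)
Definition part145_set (n : nat) : {set {ffun 'I_n.+1 -> 'I_n.+1}} :=
  [set m : {ffun 'I_n.+1 -> 'I_n.+1} |
     (\sum_(i < n.+1) (i : nat) * (m i : nat) == n)%N
     && [forall i, (m i != ord0) ==> good_part i]].

Definition p145 (n : nat) : nat := #|part145_set n|.

Definition p145z (z : int) : int :=
  match z with Posz n => (p145 n)%:Z | Negz _ => 0%R end.

Definition P7 (k : nat) : nat := (k * (5 * k - 3)) %/ 2.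
Definition Q7 (k : nat) : nat := (k * (5 * k + 3)) %/ 2.
Definition P5 (m : nat) : nat := (m * (3 * m - 1)) %/ 2.
Definition Q5 (m : nat) : nat := (m * (3 * m + 1)) %/ 2.

Definition is_M (n : nat) (M : int) : Prop :=
  (forall m : nat, (n = 5 * P5 m \/ n = 5 * Q5 m)%N -> M = ((-1) ^+ m)%R) /\
  ((~ exists m : nat, (n = 5 * P5 m \/ n = 5 * Q5 m)%N) -> M = 0%R).

(* Let G be the generating function \prod_(i = 1, 4 mod 5) 1 / (1 - q^i) of
   p_{1,5} + p_{4,5}.  Jacobi's triple product identity gives
     (q; q^5)_oo (q^4; q^5)_oo (q^5; q^5)_oo = \sum_(k in Z) (-1)^k q^(k(5k-3)/2),
   and, with q^15 in place of q^5,
     (q^5; q^5)_oo = (q^5; q^15)_oo (q^10; q^15)_oo (q^15; q^15)_oo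
                   = \sum_(k in Z) (-1)^k q^(5k(3k-1)/2).
   Since G (q; q^5)_oo (q^4; q^5)_oo = 1, multiplying the first identity by G
   shows that G(q) \sum_k (-1)^k q^(k(5k-3)/2) is the pentagonal series in q^5;
   the theorem compares the coefficients of q^n.
   All series are handled as polynomials modulo X^T.  The finite triple product
   follows from Cauchy's q-binomial theorem; its coefficients [2N, N+k]_q are
   inverse to (q; q)_N modulo X^T as long as T <= N - |k|, and the terms with
   |k| >= T vanish modulo X^T. *)

From mathcomp Require Import all_boot all_order all_algebra.
From mathcomp Require Import zify ring.
Import GRing.Theory Num.Theory.
Local Open Scope ring_scope.

Definition eqmodX {R : comNzRingType} (T : nat) (p q : {poly R}) :=
  exists r, p = q + 'X^T * r.

Notation "p = q %[modX T ]" := (eqmodX T p q)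
  (at level 70, q at next level) : ring_scope.

Definition unit_modX {R : comNzRingType} (T : nat) (p : {poly R}) :=
  exists u, p * u = 1 %[modX T].

Section EqModX.
Context {R : comNzRingType} {T : nat}.
Implicit Types p q u v : {poly R}.

Lemma eqmodX_refl p : p = p %[modX T].
Proof. by exists 0; rewrite mulr0 addr0. Qed.

Lemma eqmodX_sym {p q} : p = q %[modX T] -> q = p %[modX T].
Proof. by case=> r ->; exists (- r); rewrite mulrN addrK. Qed.

Lemma eqmodX_trans {p q u} : p = q %[modX T] -> q = u %[modX T] -> p = u %[modX T].
Proof. by case=> r -> [r' ->]; exists (r' + r); rewrite mulrDr addrA. Qed.

Lemma eqmodXW T' {p q} : p = q %[modX T] -> (T' <= T)%N -> p = q %[modX T'].
Proof.
by move=> [r ->] /subnKC le_T'T; exists ('X^(T - T') * r); rewrite mulrA -exprD le_T'T.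
Qed.

Lemma eqmodXD {p q u v} :
  p = q %[modX T] -> u = v %[modX T] -> p + u = q + v %[modX T].
Proof. by case=> r -> [r' ->]; exists (r + r'); ring. Qed.

Lemma eqmodXM {p q u v} :
  p = q %[modX T] -> u = v %[modX T] -> p * u = q * v %[modX T].
Proof. by case=> r -> [r' ->]; exists (r * v + q * r' + 'X^T * r * r'); ring. Qed.

Lemma eqmodXMl p {u v} : u = v %[modX T] -> p * u = p * v %[modX T].
Proof. exact: eqmodXM (eqmodX_refl p). Qed.

Lemma eqmodX_sum m n (F G : nat -> {poly R}) :
    (forall i, (m <= i < n)%N -> F i = G i %[modX T]) ->
  \sum_(m <= i < n) F i = \sum_(m <= i < n) G i %[modX T].
Proof.
move=> FG; rewrite !big_seq; apply: big_ind2 => [|*|i]; first exact: eqmodX_refl.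
  exact: eqmodXD.
by rewrite mem_index_iota => /FG.
Qed.

Lemma eqmodX_prod1 (I : Type) (r : seq I) (P : pred I) (F : I -> {poly R}) :
  (forall i, P i -> F i = 1 %[modX T]) -> \prod_(i <- r | P i) F i = 1 %[modX T].
Proof.
move=> F1; apply: (big_ind (fun p => p = 1 %[modX T])) => // [|p u p1 u1].
  exact: eqmodX_refl.
by rewrite -[1]mulr1; exact: eqmodXM.
Qed.

Lemma eqmodXn0 e : (T <= e)%N -> ('X^e : {poly R}) = 0 %[modX T].
Proof. by move=> le_Te; exists 'X^(e - T); rewrite add0r -exprD subnKC. Qed.

Lemma eqmodX_1subXn e : (T <= e)%N -> 1 - ('X^e : {poly R}) = 1 %[modX T].
Proof. by case/eqmodXn0=> r ->; exists (- r); rewrite add0r mulrN. Qed.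

Lemma coef_eqmodX {p q} i : p = q %[modX T] -> (i < T)%N -> p`_i = q`_i.
Proof. by case=> r -> lt_iT; rewrite coefD coefXnM lt_iT addr0. Qed.

Lemma eqmodX_prod_tail n m (F : nat -> {poly R}) :
    (forall i, (n <= i)%N -> F i = 1 %[modX T]) -> (n <= m)%N ->
  \prod_(0 <= i < m) F i = \prod_(0 <= i < n) F i %[modX T].
Proof.
move=> F1 /subnKC <-; rewrite (@big_cat_nat _ _ _ n) ?leq_addr //=.
rewrite -[X in eqmodX _ _ X]mulr1; apply: eqmodXMl.
by rewrite big_nat_cond; apply: eqmodX_prod1 => i /andP[/andP[le_ni _] _]; exact: F1.
Qed.

Lemma eqmodX_mul2l {p u v} :
  unit_modX T p -> p * u = p * v %[modX T] -> u = v %[modX T].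
Proof.
case=> w pw1 puv.
have cancel_p r : w * (p * r) = r %[modX T].
  rewrite mulrA [w * p]mulrC -[X in eqmodX _ _ X]mul1r.
  exact: eqmodXM (eqmodX_refl r).
apply: eqmodX_trans (eqmodX_sym (cancel_p u)) _.
exact: eqmodX_trans (eqmodXMl w puv) (cancel_p v).
Qed.

Lemma unit_modXM {p q} : unit_modX T p -> unit_modX T q -> unit_modX T (p * q).
Proof.
case=> u pu1 [v qv1]; exists (u * v).
by rewrite mulrACA -[1]mulr1; exact: eqmodXM.
Qed.

Lemma unit_modX_1subXn e : (0 < e)%N -> unit_modX T (1 - 'X^e : {poly R}).
Proof.
move=> e_gt0; exists (\sum_(i < T) 'X^e ^+ i).
rewrite -opprB mulNr -subrX1 opprB -exprM.
by apply: eqmodX_1subXn; rewrite leq_pmull.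
Qed.

Lemma unit_modX_prod m (e : nat -> nat) : (forall i, 0 < e i)%N ->
  unit_modX T (\prod_(0 <= i < m) (1 - 'X^(e i)) : {poly R}).
Proof.
move=> e_gt0; apply: (big_ind (unit_modX T)) => [|p q|i _].
- by exists 1; rewrite mulr1; exact: eqmodX_refl.
- exact: unit_modXM.
- exact: unit_modX_1subXn.
Qed.

End EqModX.

Lemma bin2D m n : 'C(m + n, 2) = ('C(m, 2) + m * n + 'C(n, 2))%N.
Proof.
elim: n => [|n IHn]; first by rewrite addn0 muln0 bin0n !addn0.
by rewrite addnS !binS IHn !bin1; lia.
Qed.

Lemma bin2_double n : ('C(n, 2).*2 + n = n * n)%N.
Proof. by elim: n => // n IHn; rewrite binS bin1 doubleD; lia. Qed.

Section QBinomial.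
Context {R : comNzRingType} (q : R).

Fixpoint qbinom (m j : nat) : R :=
  match m, j with
  | _, 0 => 1
  | 0, _.+1 => 0
  | m'.+1, j'.+1 => qbinom m' j' + q ^+ j'.+1 * qbinom m' j'.+1
  end.

Definition qfact (m : nat) : R := \prod_(0 <= i < m) (1 - q ^+ i.+1).

Lemma qbinom0 m : qbinom m 0 = 1.
Proof. by case: m. Qed.

Lemma qbinom_small m j : (m < j)%N -> qbinom m j = 0.
Proof. by elim: m j => [|m IHm] [|j] //= lt_mj; rewrite !IHm ?mulr0 ?addr0 // ltnW. Qed.

Lemma qfact0 : qfact 0 = 1.
Proof. exact: big_geq. Qed.

Lemma qfactS m : qfact m.+1 = qfact m * (1 - q ^+ m.+1).
Proof. by rewrite /qfact big_nat_recr. Qed.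

Lemma qbinom_qfact m j : (j <= m)%N ->
  qbinom m j * qfact j * qfact (m - j) = qfact m.
Proof.
elim: m j => [|m IHm] [|j] //=; [by rewrite subn0 qfact0 !mul1r..|].
rewrite ltnS subSS => le_jm.
have left_part : qbinom m j * qfact j.+1 * qfact (m - j) = qfact m * (1 - q ^+ j.+1).
  by rewrite qfactS -(IHm j le_jm); ring.
have right_part : qbinom m j.+1 * qfact j.+1 * qfact (m - j) =
                  qfact m * (1 - q ^+ (m - j)).
  move: le_jm; rewrite leq_eqVlt => /orP[/eqP ->|lt_jm].
    by rewrite qbinom_small // subnn expr0 subrr mulr0 !mul0r.
  by rewrite -(subnSK lt_jm) (qfactS (m - j.+1)) -(IHm _ lt_jm); ring.
have qXD : q ^+ j.+1 * q ^+ (m - j) = q ^+ m.+1 by rewrite -exprD addSn subnKC.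
transitivity (qbinom m j * qfact j.+1 * qfact (m - j) +
              q ^+ j.+1 * (qbinom m j.+1 * qfact j.+1 * qfact (m - j))); first by ring.
by rewrite left_part right_part qfactS -qXD; ring.
Qed.

Lemma cauchy_binomial m u v :
  \prod_(0 <= i < m) (u - v * q ^+ i) =
  \sum_(0 <= j < m.+1) (-1) ^+ j * qbinom m j * q ^+ 'C(j, 2) * v ^+ j * u ^+ (m - j).
Proof.
elim: m u v => [|m IHm] u v.
  by rewrite big_geq // big_nat1 !expr0 !mulr1.
have shift : \prod_(0 <= i < m) (u - v * q ^+ i.+1) =
             \prod_(0 <= i < m) (u - (v * q) * q ^+ i).
  by apply: eq_bigr => i _; rewrite exprS mulrA.
rewrite big_nat_recl // shift IHm expr0 mulr1.
set s := fun j => (-1) ^+ j * qbinom m j * q ^+ 'C(j, 2) * (v * q) ^+ j * u ^+ (m - j).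
rewrite -/(\sum_(0 <= j < m.+1) s j).
have s_last : s m.+1 = 0 by rewrite /s qbinom_small // !(mulr0, mul0r).
have sum_s_shift : \sum_(0 <= j < m.+1) s j.+1 = \sum_(0 <= j < m.+1) s j - s 0.
  apply/eqP; rewrite eq_sym subr_eq addrC -big_nat_recl //.
  by rewrite [in X in _ == X]big_nat_recr //= s_last addr0.
have pascal j : (0 <= j < m.+1)%N ->
    (-1) ^+ j.+1 * qbinom m.+1 j.+1 * q ^+ 'C(j.+1, 2) * v ^+ j.+1 * u ^+ (m.+1 - j.+1)
    = - v * s j + u * s j.+1.
  rewrite /s binS bin1 /= subSS ltnS leq_eqVlt => /orP[/eqP ->|lt_jm].
    by rewrite (@qbinom_small m m.+1) // !exprS exprD exprMn; ring.
  by rewrite -(subnSK lt_jm) !exprS exprD exprMn; ring.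
have s0 : s 0 = u ^+ m by rewrite /s qbinom0 !expr0 subn0 !mul1r.
rewrite [in RHS]big_nat_recl // (eq_big_nat _ _ pascal) big_split /= -!mulr_sumr.
by rewrite sum_s_shift s0 !expr0 !mul1r subn0 exprS; ring.
Qed.

End QBinomial.

Lemma sum_nat_mid (V : nmodType) N (F : nat -> V) :
  \sum_(0 <= j < (N + N).+1) F j =
  \sum_(0 <= k < N.+1) F (N + k)%N + \sum_(1 <= k < N.+1) F (N - k)%N.
Proof.
rewrite (@big_cat_nat _ _ _ N) ?leqW ?leq_addr //= addrC; congr (_ + _).
  by rewrite -{1}[N]add0n big_addn -addSn addnK; apply: eq_bigr => k _; rewrite addnC.
by rewrite big_nat_rev /= add0n big_add1.
Qed.

Section JacobiTriple.
Context {R : comNzRingType} (q x y : R).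
Hypotheses (q_lreg : GRing.lreg q) (x_lreg : GRing.lreg x) (xy_q : x * y = q).

Lemma jacobi_prod_scaled N :
  \prod_(0 <= i < N + N) (q ^+ N - x * q ^+ i) =
  (-1) ^+ N * x ^+ N * q ^+ ('C(N, 2) + N * N) *
  \prod_(0 <= i < N) ((1 - x * q ^+ i) * (1 - y * q ^+ i)).
Proof.
have upper : \prod_(N <= i < N + N) (q ^+ N - x * q ^+ i) =
             \prod_(0 <= i < N) (q ^+ N * (1 - x * q ^+ i)).
  by rewrite -{1}[N]add0n big_addn addnK; apply: eq_bigr => i _; rewrite exprD; ring.
have lower : \prod_(0 <= i < N) (q ^+ N - x * q ^+ i) =
             \prod_(0 <= i < N) (- 1 * x * q ^+ i * (1 - y * q ^+ (0 + N - i.+1))).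
  apply: eq_big_nat => i /andP[_ lt_iN].
  have qN : q ^+ N = q ^+ i * (x * y) * q ^+ (N - i.+1).
    by rewrite xy_q -exprSr -exprD subnKC.
  by rewrite qN; ring.
rewrite (@big_cat_nat _ _ _ N) ?leq_addr //= upper lower.
rewrite [in RHS]big_split /= [X in _ = _ * (_ * X)]big_nat_rev /=.
rewrite !big_split /= !prodr_const_nat prodrXr bin2_sum subn0 exprD exprM.
ring.
Qed.

Lemma jacobi_coef_nonneg N k b : (k <= N)%N ->
  (-1) ^+ (N + k) * b * q ^+ 'C(N + k, 2) * x ^+ (N + k) *
    (q ^+ N) ^+ (N + N - (N + k)) =
  (-1) ^+ N * x ^+ N * q ^+ ('C(N, 2) + N * N) *
    ((-1) ^+ k * b * q ^+ 'C(k, 2) * x ^+ k).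
Proof.
move=> le_kN.
have qE : q ^+ 'C(N + k, 2) * (q ^+ N) ^+ (N + N - (N + k)) =
          q ^+ ('C(N, 2) + N * N) * q ^+ 'C(k, 2).
  rewrite -exprM -!exprD; congr (_ ^+ _); move: le_kN => /subnK <-.
  by set M := (N - k)%N; rewrite !bin2D; nia.
transitivity ((-1) ^+ (N + k) * b * x ^+ (N + k) *
              (q ^+ 'C(N + k, 2) * (q ^+ N) ^+ (N + N - (N + k)))); first by ring.
by rewrite qE !exprD; ring.
Qed.

Lemma jacobi_coef_neg N k b : (k <= N)%N ->
  (-1) ^+ (N - k) * b * q ^+ 'C(N - k, 2) * x ^+ (N - k) *
    (q ^+ N) ^+ (N + N - (N - k)) =
  (-1) ^+ N * x ^+ N * q ^+ ('C(N, 2) + N * N) *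
    ((-1) ^+ k * b * q ^+ 'C(k, 2) * y ^+ k).
Proof.
move=> /subnK <-; set M := (N - k)%N; rewrite addnK.
have qE : q ^+ 'C(M, 2) * (q ^+ (M + k)) ^+ (M + k + (M + k) - M) =
          q ^+ ('C(M + k, 2) + (M + k) * (M + k)) * q ^+ 'C(k, 2) * (x * y) ^+ k.
  rewrite xy_q -exprM -!exprD; congr (_ ^+ _).
  by have := bin2_double k; rewrite !bin2D -addnn; nia.
transitivity ((-1) ^+ M * b * x ^+ M *
              (q ^+ 'C(M, 2) * (q ^+ (M + k)) ^+ (M + k + (M + k) - M))); first by ring.
by rewrite qE -[(-1) ^+ M](signrMK k) !exprD exprMn; ring.
Qed.

Lemma finite_jacobi_triple N :
  \prod_(0 <= i < N) ((1 - x * q ^+ i) * (1 - y * q ^+ i)) =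
  \sum_(0 <= k < N.+1) (-1) ^+ k * qbinom q (N + N) (N + k) * q ^+ 'C(k, 2) * x ^+ k
  + \sum_(1 <= k < N.+1) (-1) ^+ k * qbinom q (N + N) (N - k) * q ^+ 'C(k, 2) * y ^+ k.
Proof.
have c_lreg : GRing.lreg ((-1) ^+ N * x ^+ N * q ^+ ('C(N, 2) + N * N)).
  by apply/lregM; [apply/lregM; [exact: lreg_sign|]|]; apply: lregX.
apply: c_lreg; rewrite -jacobi_prod_scaled cauchy_binomial sum_nat_mid.
rewrite mulrDr !mulr_sumr.
congr (_ + _); apply: eq_big_nat => k /andP[_]; rewrite ltnS => le_kN.
  exact: jacobi_coef_nonneg.
exact: jacobi_coef_neg.
Qed.

End JacobiTriple.

Definition poch {R : comNzRingType} (a c N : nat) : {poly R} :=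
  \prod_(0 <= i < N) (1 - 'X^(c + a * i)).

Definition jtp_exp (a b k : nat) : nat := a * 'C(k, 2) + b * k.

(* The terms of index k and -k of \sum_(k in Z) (-1)^k q^(a k(k-1)/2 + b k),
   for 0 <= k <= N. *)
Definition jtp_sum {R : comNzRingType} (a b N : nat) : {poly R} :=
  \sum_(0 <= k < N.+1) (-1) ^+ k * 'X^(jtp_exp a b k)
  + \sum_(1 <= k < N.+1) (-1) ^+ k * 'X^(jtp_exp a (a - b) k).

Lemma leq_jtp_exp a b k : (0 < b)%N -> (k <= jtp_exp a b k)%N.
Proof. by move=> b_gt0; rewrite /jtp_exp (leq_trans (leq_pmull _ b_gt0)) ?leq_addl. Qed.

Section TruncatedJacobi.
Context {R : comNzRingType}.
Implicit Types (a b c T N : nat).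

Lemma poch_jacobi a b N : (b <= a)%N ->
  poch a b N * poch a (a - b) N =
  \sum_(0 <= k < N.+1)
     (-1) ^+ k * qbinom 'X^a (N + N) (N + k) * 'X^(jtp_exp a b k)
  + \sum_(1 <= k < N.+1)
     (-1) ^+ k * qbinom 'X^a (N + N) (N - k) * 'X^(jtp_exp a (a - b) k) :> {poly R}.
Proof.
move=> le_ba.
have XnE e i : 'X^(e + a * i) = 'X^e * ('X^a : {poly R}) ^+ i by rewrite exprD exprM.
have Xn_lreg e : GRing.lreg ('X^e : {poly R}) by apply/monic_lreg/monicXn.
rewrite /poch -big_split /=.
under eq_bigr do rewrite !XnE.
rewrite (finite_jacobi_triple _ _ _ (Xn_lreg a) (Xn_lreg b)) -?exprD ?subnKC //.
by congr (_ + _); apply: eq_bigr => k _; rewrite -!exprM -mulrA -exprD.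
Qed.

Lemma qfact_poch a m : qfact ('X^a : {poly R}) m = poch a a m.
Proof. by apply: eq_bigr => i _; rewrite -exprM mulnS. Qed.

Lemma poch_tail a c T N : (0 < a)%N -> (T <= N)%N ->
  (poch a c N : {poly R}) = poch a c T %[modX T].
Proof.
move=> a_gt0 le_TN; apply: eqmodX_prod_tail => // i le_Ti.
by apply/eqmodX_1subXn/(leq_trans le_Ti)/(leq_trans (leq_pmull _ a_gt0))/leq_addl.
Qed.

Lemma unit_poch a c T N : (0 < c)%N -> unit_modX T (poch a c N : {poly R}).
Proof.
by move=> c_gt0; apply: unit_modX_prod => i; rewrite (leq_trans c_gt0) ?leq_addr.
Qed.

(* Modulo X^T, every (q; q)_m with m >= T equals the unit (q; q)_T, so by
   [qbinom_qfact] the q-binomial coefficient is its inverse. *)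
Lemma qbinom_poch_eqmodX a T N m j : (0 < a)%N -> (T <= N)%N ->
    (T <= j)%N -> (j <= m)%N -> (T <= m - j)%N ->
  qbinom ('X^a : {poly R}) m j * poch a a N = 1 %[modX T].
Proof.
move=> a_gt0 le_TN le_Tj le_jm le_Tmj.
have [u Qu1] := unit_poch a a T T a_gt0; set Q := poch a a T in Qu1.
have qfactQ i : (T <= i)%N -> qfact 'X^a i = Q %[modX T].
  by move=> le_Ti; rewrite qfact_poch; apply: poch_tail.
have gQQ : qbinom 'X^a m j * Q * Q = Q %[modX T].
  apply: (@eqmodX_trans _ _ _ (qbinom 'X^a m j * qfact 'X^a j * qfact 'X^a (m - j))).
    by apply: eqmodXM; [apply: eqmodXMl|]; apply/eqmodX_sym/qfactQ.
  by rewrite qbinom_qfact //; apply/qfactQ/(leq_trans le_Tj).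
apply: eqmodX_trans (eqmodXMl _ (poch_tail _ _ _ _ a_gt0 le_TN)) _.
rewrite -[qbinom _ _ _ * Q]mulr1.
apply: eqmodX_trans (eqmodX_sym (eqmodXMl _ Qu1)) _.
by rewrite mulrA; exact: eqmodX_trans (eqmodXM gQQ (eqmodX_refl u)) Qu1.
Qed.

Lemma eqmodX_monomial T e (s g p : {poly R}) :
    (T <= e)%N \/ g * p = 1 %[modX T] ->
  s * g * 'X^e * p = s * 'X^e %[modX T].
Proof.
case=> [le_Te | gp1].
  have Xe0 : ('X^e : {poly R}) = 0 %[modX T] := eqmodXn0 _ le_Te.
  have sX0 := eqmodXMl s Xe0; have sgpX0 := eqmodXMl (s * g * p) Xe0.
  rewrite !mulr0 in sX0 sgpX0.
  by rewrite mulrAC; exact: eqmodX_trans sgpX0 (eqmodX_sym sX0).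
have -> : s * g * 'X^e * p = g * p * (s * 'X^e) by ring.
by rewrite -[X in eqmodX _ _ X]mul1r; exact: eqmodXM gp1 (eqmodX_refl _).
Qed.

Lemma jacobi_triple_eqmodX a b T N : (0 < b < a)%N -> (T + T <= N)%N ->
  (poch a b N * poch a (a - b) N * poch a a N : {poly R}) = jtp_sum a b N %[modX T].
Proof.
move=> /andP[b_gt0 lt_ba] le_TTN; have a_gt0 := ltn_trans b_gt0 lt_ba.
have ab_gt0 : (0 < a - b)%N by rewrite subn_gt0.
rewrite /jtp_sum poch_jacobi ?(ltnW lt_ba) // mulrDl !mulr_suml.
apply: eqmodXD; apply: eqmodX_sum => k /andP[_ lt_kN]; apply: eqmodX_monomial.
all: case: (leqP T k) => [le_Tk | lt_kT]; [left | right].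
- exact/(leq_trans le_Tk)/leq_jtp_exp.
- by apply: qbinom_poch_eqmodX; lia.
- exact/(leq_trans le_Tk)/leq_jtp_exp.
- by apply: qbinom_poch_eqmodX; lia.
Qed.

End TruncatedJacobi.

Lemma prod_nat_residues (R : comPzSemiRingType) m N (F : nat -> R) :
  \prod_(0 <= j < N * m) F j = \prod_(0 <= r < m) \prod_(0 <= i < N) F (i * m + r)%N.
Proof.
rewrite big_nat_mul exchange_big_nat; apply: eq_bigr => i _.
rewrite -{1}[(i * m)%N]add0n big_addn mulSn addnK.
by apply: eq_bigr => r _; rewrite addnC.
Qed.

Lemma poch_residues (R : comNzRingType) a c m N :
  poch a c (N * m) = \prod_(0 <= r < m) poch (a * m) (c + a * r) N :> {poly R}.
Proof.
rewrite /poch prod_nat_residues; apply: eq_bigr => r _; apply: eq_bigr => i _.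
by congr (1 - 'X^_); nia.
Qed.

Definition gen145 (n : nat) : {poly int} :=
  \prod_(i < n.+1) \sum_(j < n.+1)
    (if (j != ord0) ==> good_part i then 'X^(i * j) else 0).

Definition denom145 (m : nat) : {poly int} :=
  \prod_(0 <= i < m) (if good_part i then 1 - 'X^i else 1).

Lemma coef_gen145 n : (gen145 n)`_n = (p145 n)%:Z.
Proof.
rewrite /gen145 bigA_distr_bigA coef_sum /p145 -natz -sumr_const [in RHS]big_mkcond /=.
apply: eq_bigr => f _; rewrite inE.
have [allgood | /forallPn[i bad]] := boolP [forall i, (f i != ord0) ==> good_part i].
  rewrite andbT (eq_bigr (fun i : 'I_n.+1 => 'X^(i * f i))) => [|i _]; last first.
    by rewrite (forallP allgood).
  by rewrite prodrXr coefXn eq_sym; case: (_ == _).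
by rewrite (bigD1 i) //= (negbTE bad) mul0r coef0 andbF.
Qed.

Lemma good_part_gt0 i : good_part i -> (0 < i)%N.
Proof. by case: i. Qed.

Lemma gen145_denom n : gen145 n * denom145 n.+1 = 1 %[modX n.+1].
Proof.
rewrite /denom145 big_mkord -big_split /=; apply: eqmodX_prod1 => i _.
have [good_i | bad_i] := boolP (good_part i).
  rewrite (eq_bigr (fun j : 'I_n.+1 => 'X^i ^+ j)) => [|j _]; last first.
    by rewrite implybT exprM.
  rewrite mulrC -opprB mulNr -subrX1 opprB -exprM.
  by apply: eqmodX_1subXn; rewrite leq_pmull // good_part_gt0.
rewrite mulr1 big_ord_recl /= muln0 expr0 big1 ?addr0 => [|j _] //.
exact: eqmodX_refl.
Qed.

Lemma denom145_tail T m : (T <= m)%N -> denom145 m = denom145 T %[modX T].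
Proof.
move=> le_Tm; apply: eqmodX_prod_tail => // i le_Ti.
by case: (good_part i); [exact: eqmodX_1subXn | exact: eqmodX_refl].
Qed.

Lemma gen145_eqmodX m n : (m <= n)%N -> gen145 n = gen145 m %[modX m.+1].
Proof.
move=> le_mn; have Dm := gen145_denom m.
have Dn : gen145 n * denom145 m.+1 = 1 %[modX m.+1].
  apply: eqmodX_trans (eqmodXW m.+1 (gen145_denom n) le_mn).
  exact/eqmodXMl/eqmodX_sym/denom145_tail.
apply: (@eqmodX_mul2l _ _ (denom145 m.+1)); first by exists (gen145 m); rewrite mulrC.
by rewrite mulrC [X in eqmodX _ _ X]mulrC; exact: eqmodX_trans Dn (eqmodX_sym Dm).
Qed.

Lemma coef_gen145_le m n : (m <= n)%N -> (gen145 n)`_m = (p145 m)%:Z.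
Proof.
by move=> le_mn; rewrite (coef_eqmodX _ (gen145_eqmodX _ _ le_mn)) ?coef_gen145.
Qed.

Lemma denom145_poch N : denom145 (N * 5) = poch 5 1 N * poch 5 4 N.
Proof.
rewrite /denom145 prod_nat_residues.
have residue r : (0 <= r < 5)%N ->
    \prod_(0 <= i < N) (if good_part (i * 5 + r) then 1 - 'X^(i * 5 + r) else 1) =
    if good_part r then poch 5 r N else 1 :> {poly int}.
  move=> _; under eq_bigr => i _ do rewrite /good_part modnMDl -/(good_part r).
  case: (good_part r); last exact: big1_eq.
  by apply: eq_bigr => i _; rewrite addnC mulnC.
by rewrite (eq_big_nat _ _ residue) !big_nat_recr //= big_geq // !mul1r !mulr1.
Qed.

Lemma poch15_poch5 N :
  poch 15 5 N * poch 15 10 N * poch 15 15 N = poch 5 5 (N * 3) :> {poly int}.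
Proof. by rewrite poch_residues !big_nat_recr //= big_geq // mul1r. Qed.

Lemma gen145_jacobi n N : (n.+1 + n.+1 <= N)%N ->
  gen145 n * jtp_sum 5 1 N = jtp_sum 15 5 N %[modX n.+1].
Proof.
move=> le_N; set T := n.+1.
have J5 := @jacobi_triple_eqmodX int 5 1 T N isT le_N.
have J15 := @jacobi_triple_eqmodX int 15 5 T N isT le_N.
have inv : gen145 n * (poch 5 1 N * poch 5 4 N) = 1 %[modX T].
  rewrite -denom145_poch; apply: eqmodX_trans (gen145_denom n).
  by apply/eqmodXMl/denom145_tail; lia.
have P55 : (poch 5 5 N : {poly int}) = jtp_sum 15 5 N %[modX T].
  apply: eqmodX_trans (poch_tail 5 5 T N isT _) _; first lia.
  apply: eqmodX_trans (eqmodX_sym (poch_tail 5 5 T (N * 3) isT _)) _; first lia.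
  by rewrite -poch15_poch5.
apply: eqmodX_trans (eqmodXMl _ (eqmodX_sym J5)) _.
by rewrite mulrA -[X in eqmodX _ _ X]mul1r; exact: eqmodXM inv P55.
Qed.

Section PolygonalNumbers.
Local Open Scope nat_scope.

Lemma P7E k : P7 k = jtp_exp 5 1 k.
Proof.
rewrite /P7 (_ : k * (5 * k - 3) = 2 * jtp_exp 5 1 k) ?mulKn //.
by have := bin2_double k; rewrite /jtp_exp; case: k => [|k] //; nia.
Qed.

Lemma Q7E k : Q7 k = jtp_exp 5 4 k.
Proof.
rewrite /Q7 (_ : k * (5 * k + 3) = 2 * jtp_exp 5 4 k) ?mulKn //.
by have := bin2_double k; rewrite /jtp_exp; nia.
Qed.

Lemma P5E k : P5 k = jtp_exp 3 1 k.
Proof.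
rewrite /P5 (_ : k * (3 * k - 1) = 2 * jtp_exp 3 1 k) ?mulKn //.
by have := bin2_double k; rewrite /jtp_exp; case: k => [|k] //; nia.
Qed.

Lemma Q5E k : Q5 k = jtp_exp 3 2 k.
Proof.
rewrite /Q5 (_ : k * (3 * k + 1) = 2 * jtp_exp 3 2 k) ?mulKn //.
by have := bin2_double k; rewrite /jtp_exp; nia.
Qed.

Lemma jtp_expS a b k : jtp_exp a b k.+1 = jtp_exp a b k + a * k + b.
Proof. by rewrite /jtp_exp binS bin1 mulnDr mulnS; lia. Qed.

Lemma jtp_exp_mono a b : 0 < b -> {mono jtp_exp a b : m n / m <= n}.
Proof.
move=> b_gt0; apply: leq_mono; apply: homo_ltn => [y x z|k]; first exact: ltn_trans.
by rewrite jtp_expS; lia.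
Qed.

Lemma jtp_expM c a b k : c * jtp_exp a b k = jtp_exp (c * a) (c * b) k.
Proof. by rewrite /jtp_exp mulnDr !mulnA. Qed.

Lemma P5_inj : injective P5.
Proof. by move=> a b; rewrite !P5E; apply/incn_inj/jtp_exp_mono. Qed.

Lemma Q5_inj : injective Q5.
Proof. by move=> a b; rewrite !Q5E; apply/incn_inj/jtp_exp_mono. Qed.

Lemma P5_eq_Q5 a b : P5 a = Q5 b -> b = 0.
Proof.
rewrite P5E Q5E => eq_ab; apply/eqP; rewrite -leqn0 leqNgt; apply/negP => b_gt0.
have mono := leqW_mono (jtp_exp_mono 3 1 isT).
have lt_ba : jtp_exp 3 1 b < jtp_exp 3 1 a by rewrite eq_ab /jtp_exp; lia.
have lt_aSb : jtp_exp 3 1 a < jtp_exp 3 1 b.+1 by rewrite eq_ab jtp_expS /jtp_exp; lia.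
by rewrite !mono ltnS in lt_ba lt_aSb; lia.
Qed.

Lemma leq_P5 k : k <= P5 k.
Proof. by rewrite P5E leq_jtp_exp. Qed.

Lemma leq_Q5 k : k <= Q5 k.
Proof. by rewrite Q5E leq_jtp_exp. Qed.

End PolygonalNumbers.

Lemma sum_sign_indicator a b n m (f : nat -> nat) :
    (forall k, (a <= k < b)%N -> (n == f k) = (k == m)) ->
  \sum_(a <= k < b) (-1) ^+ k * (n == f k)%:R =
  if (a <= m < b)%N then (-1) ^+ m else 0 :> int.
Proof.
move=> fm; rewrite (eq_big_nat _ _ (F2 := fun k => if k == m then (-1) ^+ k else 0)).
  by rewrite -big_mkcond big_nat1_eq.
by move=> k /fm ->; case: (k == m); rewrite ?mulr1 ?mulr0.
Qed.

Lemma pentagonal_dec n :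
  {m | (n = 5 * P5 m \/ n = 5 * Q5 m)%N} + ~ exists m, (n = 5 * P5 m \/ n = 5 * Q5 m)%N.
Proof.
have [/existsP/sigW[m /orP hm] | /existsPn none] :=
  boolP [exists m : 'I_n.+1, (n == 5 * P5 m)%N || (n == 5 * Q5 m)%N].
  by left; exists m; case: hm => /eqP; [left | right].
right=> -[m hm]; have le_mn : (m < n.+1)%N.
  by case: hm => ->; rewrite ltnS (leq_trans _ (leq_pmull _ _)) ?leq_P5 ?leq_Q5.
by have := none (Ordinal le_mn); case: hm => /= ->; rewrite eqxx ?orbT.
Qed.

Lemma pentagonal_sum n M N : is_M n M -> (n < N)%N ->
  \sum_(0 <= k < N.+1) (-1) ^+ k * (n == 5 * P5 k)%N%:R
  + \sum_(1 <= k < N.+1) (-1) ^+ k * (n == 5 * Q5 k)%N%:R = M.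
Proof.
case=> M_pent M_none lt_nN.
have sum0 a (f : nat -> nat) : (forall k, (a <= k)%N -> n != f k) ->
    \sum_(a <= k < N.+1) (-1) ^+ k * (n == f k)%:R = 0 :> int.
  move=> nf; rewrite (@sum_sign_indicator _ _ _ N.+1) ?ltnn ?andbF //.
  move=> k /andP[le_ak lt_kN].
  by rewrite (negbTE (nf k le_ak)) ltn_eqF.
have sum1 a m (f : nat -> nat) : injective f -> n = (5 * f m)%N -> (a <= m <= n)%N ->
    \sum_(a <= k < N.+1) (-1) ^+ k * (n == 5 * f k)%N%:R = (-1) ^+ m :> int.
  move=> f_inj n_eq /andP[le_am le_mn]; rewrite (@sum_sign_indicator _ _ _ m).
    by rewrite le_am ltnS (leq_trans le_mn (ltnW lt_nN)).
  by move=> k _; rewrite n_eq eqn_mul2l /= (inj_eq f_inj) eq_sym.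
case: (pentagonal_dec n) => [[m hm] | none]; last first.
  have nf k : (n != 5 * P5 k) && (n != 5 * Q5 k).
    by apply/andP; split; apply/eqP => n_eq; apply: none; exists k; auto.
  by rewrite (M_none none) !sum0 ?addr0 // => k _; case/andP: (nf k).
have le_mn : (m <= n)%N.
  by case: hm => ->; apply: leq_trans (leq_pmull _ _); rewrite ?leq_P5 ?leq_Q5.
rewrite (M_pent m hm); case: hm => n_eq; last case: (posnP m) => [m0 | m_gt0].
- rewrite (sum1 _ _ _ P5_inj n_eq) ?le_mn // sum0 ?addr0 // => k k_gt0.
  by rewrite n_eq eqn_mul2l /=; apply/eqP => /P5_eq_Q5 k0; rewrite k0 in k_gt0.
- rewrite m0 in n_eq *; rewrite (sum1 _ 0 _ P5_inj n_eq) // sum0 ?addr0 // => k k_gt0.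
  by rewrite n_eq eqn_mul2l /= (inj_eq Q5_inj) eq_sym -lt0n.
- rewrite (sum1 _ _ _ Q5_inj n_eq) ?m_gt0 ?le_mn // sum0 ?add0r // => k _.
  by rewrite n_eq eqn_mul2l /=; apply/eqP => /esym /P5_eq_Q5 m0; rewrite m0 in m_gt0.
Qed.

Lemma p145z_subn n e :
  p145z (n%:Z - e%:Z) = if (e <= n)%N then (p145 (n - e))%:Z else 0.
Proof.
case: leqP => [le_en | lt_ne]; first by rewrite subzn.
suff -> : n%:Z - e%:Z = Negz (e - n).-1 by [].
by rewrite NegzE prednK ?subn_gt0 // -subzn ?opprB // ltnW.
Qed.

Lemma coef_signXn (R : comNzRingType) k e i :
  ((-1) ^+ k * 'X^e : {poly R})`_i = (-1) ^+ k * (i == e)%:R.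
Proof. by rewrite -(rmorph_sign polyC) coefCM coefXn. Qed.

Lemma coef_gen145_signXn n k e :
  (gen145 n * ((-1) ^+ k * 'X^e))`_n = (-1) ^+ k * p145z (n%:Z - e%:Z).
Proof.
rewrite mulrCA -(rmorph_sign polyC) coefCM coefMXn p145z_subn ltnNge.
by case: leqP => //= le_en; rewrite coef_gen145_le ?leq_subr.
Qed.

Lemma p145_jacobi n M N : is_M n M -> (n.+1 + n.+1 <= N)%N ->
  \sum_(0 <= k < N.+1) (-1) ^+ k * p145z (n%:Z - (P7 k)%:Z)
  + \sum_(1 <= k < N.+1) (-1) ^+ k * p145z (n%:Z - (Q7 k)%:Z) = M.
Proof.
move=> isM le_N; rewrite -(pentagonal_sum _ _ N isM); last by lia.
transitivity ((gen145 n * jtp_sum 5 1 N)`_n).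
  rewrite /jtp_sum mulrDr !mulr_sumr coefD !coef_sum.
  by congr (_ + _); apply: eq_bigr => k _; rewrite coef_gen145_signXn ?P7E ?Q7E.
rewrite (coef_eqmodX n (gen145_jacobi _ _ le_N)) // /jtp_sum coefD !coef_sum.
by congr (_ + _); apply: eq_bigr => k _; rewrite coef_signXn ?P5E ?Q5E jtp_expM.
Qed.

Theorem theorem2p3 (n : nat) (M : int) :
  is_M n M ->
  exists K : nat, forall N : nat, (K <= N)%N ->
    p145z n%:Z =
      M + \sum_(1 <= k < N.+1)
            (-1) ^+ k.+1 * (p145z (n%:Z - (P7 k)%:Z) + p145z (n%:Z - (Q7 k)%:Z)).
Proof.
move=> isM; exists (n.+1 + n.+1) => N le_N.
rewrite -(p145_jacobi _ _ _ isM le_N) big_ltn // expr0 mul1r subr0.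
set SP := \sum_(1 <= k < N.+1) _; set SQ := \sum_(1 <= k < N.+1) _.
rewrite [X in _ + X](_ : _ = - (SP + SQ)); first by ring.
by rewrite -big_split -sumrN; apply: eq_bigr => k _ /=; rewrite exprS; ring.
Qed.
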